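(* For every cartesian left-additive category $\mathcal{C}$, the category $\mathbf{Lens}_A(\mathcal{C})$ is a cartesian left-additive category, and every cartesian left-additive functor $F:\mathcal{C}\to\mathcal{D}$ induces a cartesian left-additive functor $\mathbf{Lens}_A(F):\mathbf{Lens}_A(\mathcal{C})\to\mathbf{Lens}_A(\mathcal{D})$, sending an object $(A,A')$ to $(F(A),F(A'))$ and a lens $(f,f^* )$ to $(F(f),\overline{f^*})$ where $\overline{f^*}$ is the composite $F(A)\times F(B')\cong F(A\times B')\xrightarrow{F(f^* )}F(A')$. This assignment preserves identities and composition, so that $\mathbf{Lens}_A$ is a functor $\mathbf{CLACat}\to\mathbf{CLACat}$.
   Context: Composition is written diagrammatically: $f;g$ means first $f$ then $g$. A left additive category is a category in which each hom-set is a commutative monoid (addition $+$, zero maps $0$) such that $f;(g+h)=f;g+f;h$ and $f;0=0$. A map $h:X\to Y$ is additive if $(x+y);h=x;h+y;h$ and $0;h=0$ for all $x,y:Z\to X$. A cartesian left-additive category is a left additive category with chosen finite products (projections $\pi_i$, pairing $\langle-,-\rangle$, terminal object) in which all projections are additive. A morphism $f:X\times A\to B$ is additive in the second variable (the variable $A$) if for all $x:Z\to X$ and $a_1,a_2:Z\to A$ one has $\langle x,a_1+a_2\rangle;f=\langle x,a_1\rangle;f+\langle x,a_2\rangle;f$ and $\langle x,0\rangle;f=0$ (equivalently, $f$ is additive as a map $A\to B$ in the coKleisli category of the comonad $X\times-$). $\mathbf{CLACat}$ is the category whose objects are cartesian left-additive categories and whose morphisms are cartesian left-additive functors, i.e.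 functors preserving finite products and the commutative monoid structure on hom-sets ($F(f+g)=F(f)+F(g)$, $F(0)=0$). For a cartesian category $\mathcal{C}$, $\mathbf{Lens}(\mathcal{C})$ has objects pairs $(A,A')$ of objects of $\mathcal{C}$; a morphism $(A,A')\to(B,B')$ is a pair $(f,f^* )$ with $f:A\to B$ and $f^*:A\times B'\to A'$; the identity on $(A,A')$ is $(1_A,\pi_1)$; the composite of $(f,f^* ):(A,A')\to(B,B')$ and $(g,g^* ):(B,B')\to(C,C')$ is $(f;g,\ \langle\pi_0,\langle\pi_0;f,\pi_1\rangle;g^*\rangle;f^* )$. For a cartesian left-additive category $\mathcal{C}$, $\mathbf{Lens}_A(\mathcal{C})$ is the wide subcategory of $\mathbf{Lens}(\mathcal{C})$ consisting of those lenses $(f,f^* )$ whose backward map $f^*:A\times B'\to A'$ is additive in the second variable. *)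

From Stdlib Require Import ClassicalEpsilon.

Set Implicit Arguments.
Unset Strict Implicit.

Record CatData := {
  ob :> Type;
  hom : ob -> ob -> Type;
  idm : forall A : ob, hom A A;
  comp : forall A B C : ob, hom A B -> hom B C -> hom A C }.
Arguments hom {_} _ _.
Arguments idm {_} _.
Arguments comp {_ _ _ _} _ _.
Notation "f ;; g" := (comp f g) (at level 40, left associativity).

Record IsCat (K : CatData) : Prop := {
  cat_assoc : forall (A B C D : K) (f : hom A B) (g : hom B C) (h : hom C D),
      (f ;; g) ;; h = f ;; (g ;; h);
  cat_idl : forall (A B : K) (f : hom A B), idm A ;; f = f;
  cat_idr : forall (A B : K) (f : hom A B), f ;; idm B = f }.

Record CLAStr (K : CatData) := {
  cadd : forall A B : K, hom A B -> hom A B -> hom A B;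
  czero : forall A B : K, hom A B;
  cprod : K -> K -> K;
  cpi0 : forall A B : K, hom (cprod A B) A;
  cpi1 : forall A B : K, hom (cprod A B) B;
  cpair : forall Z A B : K, hom Z A -> hom Z B -> hom Z (cprod A B);
  cterm : K;
  cbang : forall A : K, hom A cterm }.
Arguments cadd {K} S {A B} f g : rename.
Arguments czero {K} S A B : rename.
Arguments cprod {K} S A B : rename.
Arguments cpi0 {K} S A B : rename.
Arguments cpi1 {K} S A B : rename.
Arguments cpair {K} S {Z A B} f g : rename.
Arguments cterm {K} S : rename.
Arguments cbang {K} S A : rename.

Record IsCLA (K : CatData) (S : CLAStr K) : Prop := {
  cla_addA : forall (A B : K) (f g h : hom A B),
      cadd S (cadd S f g) h = cadd S f (cadd S g h);
  cla_addC : forall (A B : K) (f g : hom A B), cadd S f g = cadd S g f;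
  cla_add0 : forall (A B : K) (f : hom A B), cadd S f (czero S A B) = f;
  cla_comp_addr : forall (A B C : K) (f : hom A B) (g h : hom B C),
      f ;; cadd S g h = cadd S (f ;; g) (f ;; h);
  cla_comp_zeror : forall (A B C : K) (f : hom A B),
      f ;; czero S B C = czero S A C;
  cla_pair_pi0 : forall (Z A B : K) (f : hom Z A) (g : hom Z B),
      cpair S f g ;; cpi0 S A B = f;
  cla_pair_pi1 : forall (Z A B : K) (f : hom Z A) (g : hom Z B),
      cpair S f g ;; cpi1 S A B = g;
  cla_pair_uniq : forall (Z A B : K) (f : hom Z A) (g : hom Z B)
      (h : hom Z (cprod S A B)),
      h ;; cpi0 S A B = f -> h ;; cpi1 S A B = g -> h = cpair S f g;
  cla_bang_uniq : forall (A : K) (h : hom A (cterm S)), h = cbang S A;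
  cla_pi0_add : forall (Z A B : K) (x y : hom Z (cprod S A B)),
      cadd S x y ;; cpi0 S A B = cadd S (x ;; cpi0 S A B) (y ;; cpi0 S A B);
  cla_pi0_zero : forall (Z A B : K),
      czero S Z (cprod S A B) ;; cpi0 S A B = czero S Z A;
  cla_pi1_add : forall (Z A B : K) (x y : hom Z (cprod S A B)),
      cadd S x y ;; cpi1 S A B = cadd S (x ;; cpi1 S A B) (y ;; cpi1 S A B);
  cla_pi1_zero : forall (Z A B : K),
      czero S Z (cprod S A B) ;; cpi1 S A B = czero S Z B }.

Record CLACat := {
  ccat :> CatData;
  ccla : CLAStr ccat;
  ccat_ok : IsCat ccat;
  ccla_ok : IsCLA ccla }.

Record FunData (C D : CatData) := {
  fob : C -> D;
  fmap : forall A B : C, hom A B -> hom (fob A) (fob B) }.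
Arguments fob {C D} F A : rename.
Arguments fmap {C D} F {A B} f : rename.

Definition idF (C : CatData) : FunData C C :=
  {| fob := fun A => A; fmap := fun A B f => f |}.

Definition compF (C D E : CatData) (F : FunData C D) (G : FunData D E)
  : FunData C E :=
  {| fob := fun A => fob G (fob F A); fmap := fun A B f => fmap G (fmap F f) |}.

Record IsCLAFun (C D : CatData) (SC : CLAStr C) (SD : CLAStr D)
    (F : FunData C D) : Prop := {
  clf_id : forall A : C, fmap F (idm A) = idm (fob F A);
  clf_comp : forall (A B E : C) (f : hom A B) (g : hom B E),
      fmap F (f ;; g) = fmap F f ;; fmap F g;
  clf_add : forall (A B : C) (f g : hom A B),
      fmap F (cadd SC f g) = cadd SD (fmap F f) (fmap F g);
  clf_zero : forall A B : C,
      fmap F (czero SC A B) = czero SD (fob F A) (fob F B);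
  clf_prod : forall A B : C,
      exists psi : hom (cprod SD (fob F A) (fob F B)) (fob F (cprod SC A B)),
        psi ;; cpair SD (fmap F (cpi0 SC A B)) (fmap F (cpi1 SC A B))
          = idm _ /\
        cpair SD (fmap F (cpi0 SC A B)) (fmap F (cpi1 SC A B)) ;; psi
          = idm _;
  clf_term : exists t : hom (cterm SD) (fob F (cterm SC)),
      t ;; cbang SD _ = idm _ /\ cbang SD _ ;; t = idm _ }.

Definition CLAFun (C D : CLACat) (F : FunData C D) : Prop :=
  IsCLAFun (ccla C) (ccla D) F.

(** Objects of Lens(C): pairs (A, A').  Primitive record, so that eta holds
    definitionally. *)
#[projections(primitive)]
Record lob (T : Type) := mklob { lo1 : T; lo2 : T }.
Arguments mklob {T} _ _.
Arguments lo1 {T} _.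
Arguments lo2 {T} _.

Section LensA.
Variable C : CLACat.
Local Notation S := (ccla C).
Local Notation "A ** B" := (cprod S A B) (at level 30).
Local Notation "f +' g" := (cadd S f g) (at level 50).
Local Notation "<< f , g >>" := (cpair S f g).

Definition additive2 (X A B : C) (f : hom (X ** A) B) : Prop :=
  (forall (Z : C) (x : hom Z X) (a1 a2 : hom Z A),
      <<x, a1 +' a2>> ;; f = (<<x, a1>> ;; f) +' (<<x, a2>> ;; f)) /\
  (forall (Z : C) (x : hom Z X), <<x, czero S Z A>> ;; f = czero S Z B).

Record alens (A B : lob C) := {
  lfwd : hom (lo1 A) (lo1 B);
  lbwd : hom (lo1 A ** lo2 B) (lo2 A);
  lbwd_add : additive2 lbwd }.

Let assoc := cat_assoc (ccat_ok C).
Let pp0 := cla_pair_pi0 (ccla_ok C).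
Let pp1 := cla_pair_pi1 (ccla_ok C).

Lemma pair_comp (Z' Z A B : C) (h : hom Z' Z) (f : hom Z A) (g : hom Z B) :
  h ;; <<f, g>> = <<h ;; f, h ;; g>>.
Proof.
  apply (cla_pair_uniq (ccla_ok C)); rewrite assoc; [rewrite pp0 | rewrite pp1];
  reflexivity.
Qed.

Lemma lid_add (A : lob C) : additive2 (cpi1 S (lo1 A) (lo2 A)).
Proof. split; intros; rewrite !pp1; reflexivity. Qed.

Definition lid (A : lob C) : alens A A :=
  {| lfwd := idm _; lbwd := cpi1 S _ _; lbwd_add := lid_add A |}.

Definition lcomp_bwd (A B D : lob C) (f : alens A B) (g : alens B D)
  : hom (lo1 A ** lo2 D) (lo2 A) :=
  << cpi0 S _ _, << cpi0 S _ _ ;; lfwd f, cpi1 S _ _ >> ;; lbwd g >> ;; lbwd f.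

Lemma lcomp_key (Z X Y W V : C) (x : hom Z X) (c : hom Z W)
    (f : hom X Y) (gs : hom (Y ** W) V) :
  <<x, c>> ;; << cpi0 S X W, << cpi0 S X W ;; f, cpi1 S X W >> ;; gs >>
  = <<x, <<x ;; f, c>> ;; gs>>.
Proof.
  rewrite pair_comp, pp0, <- assoc, pair_comp, <- assoc, pp0, pp1.
  reflexivity.
Qed.

Lemma lcomp_add (A B D : lob C) (f : alens A B) (g : alens B D) :
  additive2 (lcomp_bwd f g).
Proof.
  destruct (lbwd_add f) as [fa fz]; destruct (lbwd_add g) as [ga gz].
  unfold lcomp_bwd; split; intros.
  - rewrite <- !assoc, !lcomp_key, ga, fa; reflexivity.
  - rewrite <- !assoc, !lcomp_key, gz, fz; reflexivity.
Qed.

Definition lcomp (A B D : lob C) (f : alens A B) (g : alens B D) : alens A D :=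
  {| lfwd := lfwd f ;; lfwd g; lbwd := lcomp_bwd f g;
     lbwd_add := lcomp_add f g |}.

Definition LensA : CatData :=
  {| ob := lob C; hom := @alens; idm := lid; comp := lcomp |}.

End LensA.

Section LensAFun.
Variables (C D : CLACat) (F : FunData C D) (HF : CLAFun F).
Local Notation SC := (ccla C).
Local Notation SD := (ccla D).

Local Notation phi A B := (cpair SD (fmap F (cpi0 SC A B)) (fmap F (cpi1 SC A B))).

Definition prod_inv (A B : C)
  : hom (cprod SD (fob F A) (fob F B)) (fob F (cprod SC A B)) :=
  proj1_sig (constructive_indefinite_description _ (clf_prod HF A B)).

Lemma prod_inv_spec (A B : C) :
  prod_inv A B ;; phi A B = idm _ /\ phi A B ;; prod_inv A B = idm _.
Proof. exact (proj2_sig (constructive_indefinite_description _ (clf_prod HF A B))). Qed.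

Let cC := ccat_ok C.
Let cD := ccat_ok D.
Let lC := ccla_ok C.
Let lD := ccla_ok D.

Lemma prod_inv_pi0 (A B : C) :
  prod_inv A B ;; fmap F (cpi0 SC A B) = cpi0 SD _ _.
Proof.
  destruct (prod_inv_spec A B) as [H1 _].
  rewrite <- (cla_pair_pi0 lD (fmap F (cpi0 SC A B)) (fmap F (cpi1 SC A B))).
  rewrite <- (cat_assoc cD), H1, (cat_idl cD). reflexivity.
Qed.

Lemma prod_inv_pi1 (A B : C) :
  prod_inv A B ;; fmap F (cpi1 SC A B) = cpi1 SD _ _.
Proof.
  destruct (prod_inv_spec A B) as [H1 _].
  rewrite <- (cla_pair_pi1 lD (fmap F (cpi0 SC A B)) (fmap F (cpi1 SC A B))).
  rewrite <- (cat_assoc cD), H1, (cat_idl cD). reflexivity.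
Qed.

Lemma prod_inv_cancel (Z : D) (A B : C) (h : hom Z (fob F (cprod SC A B)))
    (k : hom Z (cprod SD (fob F A) (fob F B))) :
  h ;; fmap F (cpi0 SC A B) = k ;; cpi0 SD _ _ ->
  h ;; fmap F (cpi1 SC A B) = k ;; cpi1 SD _ _ ->
  h = k ;; prod_inv A B.
Proof.
  intros E0 E1.
  destruct (prod_inv_spec A B) as [_ H2].
  assert (Hk : h ;; phi A B = k).
  { rewrite (pair_comp (C:=D)). symmetry.
    apply (cla_pair_uniq lD); symmetry; assumption. }
  rewrite <- Hk, (cat_assoc cD), H2, (cat_idr cD). reflexivity.
Qed.

Definition fbar (A B : lob C) (l : alens A B)
  : hom (cprod SD (fob F (lo1 A)) (fob F (lo2 B))) (fob F (lo2 A)) :=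
  prod_inv (lo1 A) (lo2 B) ;; fmap F (lbwd l).

Lemma fbar_add (A B : lob C) (l : alens A B) : additive2 (fbar l).
Proof.
  destruct (lbwd_add l) as [la lz].
  unfold fbar; split.
  - intros Z x b1 b2.

    set (w := cpair SD x (cpair SD b1 b2 ;; prod_inv (lo2 B) (lo2 B)) ;; prod_inv (lo1 A) (cprod SC (lo2 B) (lo2 B))).
    assert (w0 : w ;; fmap F (cpi0 SC (lo1 A) (cprod SC (lo2 B) (lo2 B))) = x).
    { unfold w. rewrite (cat_assoc cD), prod_inv_pi0, (cla_pair_pi0 lD). reflexivity. }
    assert (w1 : w ;; fmap F (cpi1 SC (lo1 A) (cprod SC (lo2 B) (lo2 B))) = cpair SD b1 b2 ;; prod_inv (lo2 B) (lo2 B)).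
    { unfold w. rewrite (cat_assoc cD), prod_inv_pi1, (cla_pair_pi1 lD). reflexivity. }
    assert (gen : forall t : hom (cprod SC (lo1 A) (cprod SC (lo2 B) (lo2 B))) (lo2 B),
      w ;; fmap F (cpair SC (cpi0 SC (lo1 A) (cprod SC (lo2 B) (lo2 B))) t)
      = cpair SD x (w ;; fmap F t) ;; prod_inv (lo1 A) (lo2 B)).
    { intro t. apply prod_inv_cancel.
      - rewrite (cat_assoc cD), <- (clf_comp HF), (cla_pair_pi0 lC), w0, (cla_pair_pi0 lD).
        reflexivity.
      - rewrite (cat_assoc cD), <- (clf_comp HF), (cla_pair_pi1 lC), (cla_pair_pi1 lD).
        reflexivity. }
    assert (t0 : w ;; fmap F (cpi1 SC (lo1 A) (cprod SC (lo2 B) (lo2 B)) ;; cpi0 SC (lo2 B) (lo2 B)) = b1).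
    { rewrite (clf_comp HF), <- (cat_assoc cD), w1, (cat_assoc cD), prod_inv_pi0,
        (cla_pair_pi0 lD). reflexivity. }
    assert (t1 : w ;; fmap F (cpi1 SC (lo1 A) (cprod SC (lo2 B) (lo2 B)) ;; cpi1 SC (lo2 B) (lo2 B)) = b2).
    { rewrite (clf_comp HF), <- (cat_assoc cD), w1, (cat_assoc cD), prod_inv_pi1,
        (cla_pair_pi1 lD). reflexivity. }
    pose proof (la (cprod SC (lo1 A) (cprod SC (lo2 B) (lo2 B))) (cpi0 SC (lo1 A) (cprod SC (lo2 B) (lo2 B)))
                  (cpi1 SC (lo1 A) (cprod SC (lo2 B) (lo2 B)) ;; cpi0 SC (lo2 B) (lo2 B))
                  (cpi1 SC (lo1 A) (cprod SC (lo2 B) (lo2 B)) ;; cpi1 SC (lo2 B) (lo2 B))) as E.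
    apply (f_equal (fmap F)) in E.
    apply (f_equal (fun h => w ;; h)) in E.
    rewrite (clf_add HF), (cla_comp_addr lD) in E.
    rewrite !(clf_comp HF (cpair SC _ _)), <- !(cat_assoc cD), !gen in E.
    rewrite t0, t1, (clf_add HF), (cla_comp_addr lD), t0, t1 in E.
    rewrite <- !(cat_assoc cD). exact E.
  - intros Z x.
    pose proof (lz (lo1 A) (idm (lo1 A))) as E.
    apply (f_equal (fmap F)) in E.
    apply (f_equal (fun h => x ;; h)) in E.
    rewrite (clf_comp HF), <- (cat_assoc cD), (clf_zero HF), (cla_comp_zeror lD) in E.
    rewrite <- E, <- (cat_assoc cD). f_equal. symmetry.
    apply prod_inv_cancel.
    + rewrite (cat_assoc cD), <- (clf_comp HF), (cla_pair_pi0 lC), (clf_id HF),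
        (cat_idr cD), (cla_pair_pi0 lD). reflexivity.
    + rewrite (cat_assoc cD), <- (clf_comp HF), (cla_pair_pi1 lC), (clf_zero HF),
        (cla_comp_zeror lD), (cla_pair_pi1 lD). reflexivity.
Qed.

Definition LensA_fun : FunData (LensA C) (LensA D) :=
  @Build_FunData (LensA C) (LensA D)
    (fun A : lob C => mklob (fob F (lo1 A)) (fob F (lo2 A)))
    (fun (A B : lob C) (l : alens A B) =>
       @Build_alens D (mklob (fob F (lo1 A)) (fob F (lo2 A)))
         (mklob (fob F (lo1 B)) (fob F (lo2 B)))
         (fmap F (lfwd l)) (fbar l) (fbar_add l)).

End LensAFun.
Arguments LensA_fun {C D F} HF.

(* Every operation of Lens_A(C) is computed componentwise from C: sums and zeros
   act on forward and backward maps separately, the product of (A,A') and (B,B')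
   is (A x B, A' x B') with backward projections <pi1, 0> and <0, pi1>, and the
   terminal object is (1,1).  Additivity of backward maps in their second
   variable is what makes the axioms hold: it gives f;(g+h) = f;g + f;h, it
   splits a backward map A x (B' x C') -> A' as the sum of its restrictions
   along B' and C' (uniqueness of pairings), and it makes every backward map
   A x 1 -> A' zero (uniqueness of maps into (1,1)).
   A cartesian left-additive functor preserves additive maps, hence so does the
   inverse of its comparison iso F(A x B) -> F A x F B; the product comparison
   of Lens_A(F) is then the lens (comparison, pi1;inverse), with inverse lens
   (inverse, pi1;comparison). *)
From Stdlib Require Import FunctionalExtensionality ProofIrrelevance.

Set Implicit Arguments.
Unset Strict Implicit.

Notation "f +' g" := (cadd (ccla _) f g) (at level 50, left associativity).
Notation "<< f , g >>" := (cpair (ccla _) f g).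

Section CLAFacts.
Context {C : CLACat}.
Local Notation S := (ccla C).
Local Notation "A ** B" := (cprod S A B) (at level 30).

Lemma compA (A B X Y : C) (f : hom A B) (g : hom B X) (h : hom X Y) :
  (f ;; g) ;; h = f ;; (g ;; h).
Proof. exact (cat_assoc (ccat_ok C) f g h). Qed.

Lemma idl (A B : C) (f : hom A B) : idm A ;; f = f.
Proof. exact (cat_idl (ccat_ok C) f). Qed.

Lemma idr (A B : C) (f : hom A B) : f ;; idm B = f.
Proof. exact (cat_idr (ccat_ok C) f). Qed.

Lemma pair_pi0 (Z A B : C) (f : hom Z A) (g : hom Z B) : <<f, g>> ;; cpi0 S A B = f.
Proof. exact (cla_pair_pi0 (ccla_ok C) f g). Qed.

Lemma pair_pi1 (Z A B : C) (f : hom Z A) (g : hom Z B) : <<f, g>> ;; cpi1 S A B = g.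
Proof. exact (cla_pair_pi1 (ccla_ok C) f g). Qed.

Lemma pair_uniq (Z A B : C) (f : hom Z A) (g : hom Z B) (h : hom Z (A ** B)) :
  h ;; cpi0 S A B = f -> h ;; cpi1 S A B = g -> h = <<f, g>>.
Proof. exact (cla_pair_uniq (ccla_ok C) (h := h)). Qed.

Lemma pair_eta (Z A B : C) (h : hom Z (A ** B)) :
  <<h ;; cpi0 S A B, h ;; cpi1 S A B>> = h.
Proof. symmetry; apply pair_uniq; reflexivity. Qed.

Lemma pair_pi (A B : C) : <<cpi0 S A B, cpi1 S A B>> = idm (A ** B).
Proof. symmetry; apply pair_uniq; apply idl. Qed.

Lemma bang_uniq (A : C) (h : hom A (cterm S)) : h = cbang S A.
Proof. exact (cla_bang_uniq (ccla_ok C) h). Qed.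

Lemma addA (A B : C) (f g h : hom A B) : f +' g +' h = f +' (g +' h).
Proof. exact (cla_addA (ccla_ok C) f g h). Qed.

Lemma addC (A B : C) (f g : hom A B) : f +' g = g +' f.
Proof. exact (cla_addC (ccla_ok C) f g). Qed.

Lemma addr0 (A B : C) (f : hom A B) : f +' czero S A B = f.
Proof. exact (cla_add0 (ccla_ok C) f). Qed.

Lemma add0r (A B : C) (f : hom A B) : czero S A B +' f = f.
Proof. rewrite addC; apply addr0. Qed.

Lemma addACA (A B : C) (a b c d : hom A B) : a +' b +' (c +' d) = a +' c +' (b +' d).
Proof. rewrite !addA; f_equal; rewrite <- !addA; f_equal; apply addC. Qed.

Lemma comp_addr (A B X : C) (f : hom A B) (g h : hom B X) : f ;; (g +' h) = f ;; g +' f ;; h.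
Proof. exact (cla_comp_addr (ccla_ok C) f g h). Qed.

Lemma comp_zeror (A B X : C) (f : hom A B) : f ;; czero S B X = czero S A X.
Proof. exact (cla_comp_zeror (ccla_ok C) X f). Qed.

Lemma pi0_add (Z A B : C) (x y : hom Z (A ** B)) :
  (x +' y) ;; cpi0 S A B = x ;; cpi0 S A B +' y ;; cpi0 S A B.
Proof. exact (cla_pi0_add (ccla_ok C) x y). Qed.

Lemma pi1_add (Z A B : C) (x y : hom Z (A ** B)) :
  (x +' y) ;; cpi1 S A B = x ;; cpi1 S A B +' y ;; cpi1 S A B.
Proof. exact (cla_pi1_add (ccla_ok C) x y). Qed.

Lemma pi0_zero (Z A B : C) : czero S Z (A ** B) ;; cpi0 S A B = czero S Z A.
Proof. exact (cla_pi0_zero (ccla_ok C) Z A B). Qed.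

Lemma pi1_zero (Z A B : C) : czero S Z (A ** B) ;; cpi1 S A B = czero S Z B.
Proof. exact (cla_pi1_zero (ccla_ok C) Z A B). Qed.

Lemma pair_add (Z A B : C) (a c : hom Z A) (b d : hom Z B) :
  <<a, b>> +' <<c, d>> = <<a +' c, b +' d>>.
Proof. apply pair_uniq; rewrite ?pi0_add, ?pi1_add, ?pair_pi0, ?pair_pi1; reflexivity. Qed.

Lemma pair_zero (Z A B : C) : <<czero S Z A, czero S Z B>> = czero S Z (A ** B).
Proof. symmetry; apply pair_uniq; [apply pi0_zero | apply pi1_zero]. Qed.

Definition additive (A B : C) (h : hom A B) : Prop :=
  (forall (Z : C) (x y : hom Z A), (x +' y) ;; h = x ;; h +' y ;; h) /\
  (forall Z : C, czero S Z A ;; h = czero S Z B).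

Lemma additive_pi0 (A B : C) : additive (cpi0 S A B).
Proof. split; intros; [apply pi0_add | apply pi0_zero]. Qed.

Lemma additive_pi1 (A B : C) : additive (cpi1 S A B).
Proof. split; intros; [apply pi1_add | apply pi1_zero]. Qed.

Lemma additive_pair (Z A B : C) (f : hom Z A) (g : hom Z B) :
  additive f -> additive g -> additive <<f, g>>.
Proof.
  intros [fD f0] [gD g0]; split; intros; rewrite !pair_comp.
  - rewrite fD, gD; symmetry; apply pair_add.
  - rewrite f0, g0; apply pair_zero.
Qed.

Lemma additive_inv (A B : C) (f : hom A B) (g : hom B A) :
  additive f -> g ;; f = idm B -> f ;; g = idm A -> additive g.
Proof.
  intros [fD f0] gf fg; split; intros.
  - assert (E : x +' y = (x ;; g +' y ;; g) ;; f) by (rewrite fD, !compA, gf, !idr; reflexivity).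
    rewrite E, compA, fg; apply idr.
  - rewrite <- f0, compA, fg; apply idr.
Qed.

Lemma additive2_pi1 (X A : C) : additive2 (cpi1 S X A).
Proof. exact (lid_add (mklob X A)). Qed.

Lemma additive2_zero (X A B : C) : additive2 (czero S (X ** A) B).
Proof. split; intros; rewrite !comp_zeror; [symmetry; apply addr0 | reflexivity]. Qed.

Lemma additive2_add (X A B : C) (f g : hom (X ** A) B) :
  additive2 f -> additive2 g -> additive2 (f +' g).
Proof.
  intros [fD f0] [gD g0]; split; intros; rewrite !comp_addr.
  - rewrite fD, gD; apply addACA.
  - rewrite f0, g0; apply addr0.
Qed.

Lemma additive2_pair (X A B B' : C) (f : hom (X ** A) B) (g : hom (X ** A) B') :
  additive2 f -> additive2 g -> additive2 <<f, g>>.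
Proof.
  intros [fD f0] [gD g0]; split; intros; rewrite !pair_comp.
  - rewrite fD, gD; symmetry; apply pair_add.
  - rewrite f0, g0; apply pair_zero.
Qed.

Lemma additive2_comp_additive (X A B B' : C) (f : hom (X ** A) B) (k : hom B B') :
  additive2 f -> additive k -> additive2 (f ;; k).
Proof.
  intros [fD f0] [kD k0]; split; intros; rewrite <- !compA.
  - rewrite fD; apply kD.
  - rewrite f0; apply k0.
Qed.

Lemma additive2_subst (X A B Y : C) (t : hom (X ** A) B) (f : hom (X ** B) Y) :
  additive2 t -> additive2 f -> additive2 (<<cpi0 S X A, t>> ;; f).
Proof.
  intros [tD t0] [fD f0]; split; intros; rewrite <- !compA, !pair_comp, !pair_pi0.
  - rewrite tD; apply fD.
  - rewrite t0; apply f0.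
Qed.

End CLAFacts.

Hint Rewrite <- @compA : cla.
Hint Rewrite @idl @idr @pair_comp @pair_pi0 @pair_pi1 @pair_pi @comp_addr @comp_zeror
  @pi0_add @pi1_add @pi0_zero @pi1_zero : cla.
Ltac cla_simpl := autorewrite with cla.

Lemma alens_eq (C : CLACat) (A B : lob C) (f g : alens A B) :
  lfwd f = lfwd g -> lbwd f = lbwd g -> f = g.
Proof.
  destruct f as [f1 f2 fp], g as [g1 g2 gp]; simpl; intros -> ->.
  f_equal; apply proof_irrelevance.
Qed.

Arguments lcomp_bwd [C A B D] f g /.

Section LensACartesian.
Variable C : CLACat.
Local Notation S := (ccla C).
Local Notation "A ** B" := (cprod S A B) (at level 30).
Local Notation L := (LensA C).

Lemma lbwd_pair_add (A B : L) (l : hom A B) (Z : C) (x : hom Z (lo1 A)) (b1 b2 : hom Z (lo2 B)) :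
  <<x, b1 +' b2>> ;; lbwd l = <<x, b1>> ;; lbwd l +' <<x, b2>> ;; lbwd l.
Proof. exact (proj1 (lbwd_add l) Z x b1 b2). Qed.

Lemma lbwd_pair_zero (A B : L) (l : hom A B) (Z : C) (x : hom Z (lo1 A)) :
  <<x, czero S Z (lo2 B)>> ;; lbwd l = czero S Z (lo2 A).
Proof. exact (proj2 (lbwd_add l) Z x). Qed.

Lemma LensA_isCat : IsCat L.
Proof. split; intros; apply alens_eq; cbn; cla_simpl; reflexivity. Qed.

Definition ladd (A B : L) (f g : hom A B) : hom A B :=
  {| lfwd := lfwd f +' lfwd g; lbwd := lbwd f +' lbwd g;
     lbwd_add := additive2_add (lbwd_add f) (lbwd_add g) |}.

Definition lzero (A B : L) : hom A B :=
  {| lfwd := czero S _ _; lbwd := czero S _ _; lbwd_add := additive2_zero _ _ _ |}.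

Definition lprod (X Y : L) : L := mklob (lo1 X ** lo1 Y) (lo2 X ** lo2 Y).

Definition lpi0 (X Y : L) : hom (lprod X Y) X :=
  @Build_alens C (lprod X Y) X (cpi0 S _ _) <<cpi1 S _ _, czero S _ (lo2 Y)>>
    (additive2_pair (additive2_pi1 _ _) (additive2_zero _ _ _)).

Definition lpi1 (X Y : L) : hom (lprod X Y) Y :=
  @Build_alens C (lprod X Y) Y (cpi1 S _ _) <<czero S _ (lo2 X), cpi1 S _ _>>
    (additive2_pair (additive2_zero _ _ _) (additive2_pi1 _ _)).

Definition lpair_bwd (Z X Y : L) (f : hom Z X) (g : hom Z Y) :
  hom (lo1 Z ** (lo2 X ** lo2 Y)) (lo2 Z) :=
  <<cpi0 S _ _, cpi1 S _ _ ;; cpi0 S _ _>> ;; lbwd f +'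
  <<cpi0 S _ _, cpi1 S _ _ ;; cpi1 S _ _>> ;; lbwd g.

#[global] Arguments lpair_bwd [Z X Y] f g /.

Lemma lpair_bwd_add (Z X Y : L) (f : hom Z X) (g : hom Z Y) : additive2 (lpair_bwd f g).
Proof.
  apply additive2_add; apply additive2_subst; try apply lbwd_add;
  apply additive2_comp_additive; auto using additive2_pi1, additive_pi0, additive_pi1.
Qed.

Definition lpair (Z X Y : L) (f : hom Z X) (g : hom Z Y) : hom Z (lprod X Y) :=
  @Build_alens C Z (lprod X Y) <<lfwd f, lfwd g>> (lpair_bwd f g) (lpair_bwd_add f g).

Definition lterm : L := mklob (cterm S) (cterm S).

Definition lbang (X : L) : hom X lterm :=
  @Build_alens C X lterm (cbang S _) (czero S _ _) (additive2_zero _ _ _).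

Definition LensA_cla : CLAStr L :=
  {| cadd := ladd; czero := lzero; cprod := lprod; cpi0 := lpi0; cpi1 := lpi1;
     cpair := lpair; cterm := lterm; cbang := lbang |}.

Lemma lpair_uniq (Z X Y : L) (f : hom Z X) (g : hom Z Y) (h : hom Z (lprod X Y)) :
  h ;; lpi0 X Y = f -> h ;; lpi1 X Y = g -> h = lpair f g.
Proof.
  intros <- <-; apply alens_eq; cbn.
  - symmetry; apply pair_eta.
  - cla_simpl; rewrite <- (lbwd_pair_add h); cbn.
    rewrite pair_add, addr0, add0r, pair_eta, pair_pi, idl; reflexivity.
Qed.

Lemma lbang_uniq (X : L) (h : hom X lterm) : h = lbang X.
Proof.
  apply alens_eq; cbn; [apply bang_uniq |].
  rewrite <- (idl (lbwd h)), <- pair_pi, (bang_uniq (cpi1 S _ _)),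
    <- (bang_uniq (czero S _ _)).
  apply lbwd_pair_zero.
Qed.

Lemma LensA_isCLA : IsCLA LensA_cla.
Proof.
  split; intros; try solve [apply lpair_uniq; assumption | apply lbang_uniq];
    apply alens_eq; cbn; cla_simpl; rewrite ?lbwd_pair_add, ?lbwd_pair_zero, ?addr0, ?add0r;
    auto using addA, addC.
Qed.

Definition lens_of_maps (A B : L) (f : hom (lo1 A) (lo1 B)) (k : hom (lo2 B) (lo2 A))
  (Hk : additive k) : hom A B :=
  @Build_alens C A B f (cpi1 S _ _ ;; k) (additive2_comp_additive (additive2_pi1 _ _) Hk).

Lemma lens_of_maps_inv (A B : L) (f : hom (lo1 A) (lo1 B)) (g : hom (lo1 B) (lo1 A))
    (k : hom (lo2 B) (lo2 A)) (k' : hom (lo2 A) (lo2 B)) (Hk : additive k) (Hk' : additive k') :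
  f ;; g = idm _ -> k' ;; k = idm _ -> lens_of_maps f Hk ;; lens_of_maps g Hk' = idm A.
Proof.
  intros fg kk; apply alens_eq; cbn; [exact fg |].
  cla_simpl; rewrite compA, kk; apply idr.
Qed.

End LensACartesian.

Arguments fbar [C D F] HF [A B] l /.

Section LensAFunctor.
Variables (C D : CLACat) (F : FunData C D) (HF : CLAFun F).
Local Notation SC := (ccla C).
Local Notation SD := (ccla D).
Local Notation P := (prod_inv HF).
Local Notation phi A B := <<fmap F (cpi0 SC A B), fmap F (cpi1 SC A B)>>.
Local Notation LF := (LensA_fun HF).

Lemma fmap_comp (A B E : C) (f : hom A B) (g : hom B E) :
  fmap F (f ;; g) = fmap F f ;; fmap F g.
Proof. exact (clf_comp HF f g). Qed.

Lemma fmap_add (A B : C) (f g : hom A B) : fmap F (f +' g) = fmap F f +' fmap F g.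
Proof. exact (clf_add HF f g). Qed.

Lemma fmap_zero (A B : C) : fmap F (czero SC A B) = czero SD _ _.
Proof. exact (clf_zero HF A B). Qed.

Lemma prod_inv_pi0_comp (Z : D) (A B : C) (x : hom Z (cprod SD (fob F A) (fob F B))) :
  x ;; P A B ;; fmap F (cpi0 SC A B) = x ;; cpi0 SD _ _.
Proof. rewrite compA, prod_inv_pi0; reflexivity. Qed.

Lemma prod_inv_pi1_comp (Z : D) (A B : C) (x : hom Z (cprod SD (fob F A) (fob F B))) :
  x ;; P A B ;; fmap F (cpi1 SC A B) = x ;; cpi1 SD _ _.
Proof. rewrite compA, prod_inv_pi1; reflexivity. Qed.

Lemma fmap_pair (Z : D) (X A B : C) (h : hom Z (fob F X)) (a : hom X A) (b : hom X B) :
  h ;; fmap F <<a, b>> = <<h ;; fmap F a, h ;; fmap F b>> ;; P A B.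
Proof.
  apply prod_inv_cancel; rewrite compA, <- fmap_comp; cla_simpl; reflexivity.
Qed.

Local Hint Rewrite fmap_comp fmap_zero fmap_pair prod_inv_pi0 prod_inv_pi1
  prod_inv_pi0_comp prod_inv_pi1_comp : fmap.

Lemma fmap_additive (X Y : C) (h : hom X Y) : additive h -> additive (fmap F h).
Proof.
  intros [hD h0]; split; intros.
  - set (w := <<x, y>> ;; P X X).
    assert (w0 : w ;; fmap F (cpi0 SC X X) = x)
      by (unfold w; rewrite prod_inv_pi0_comp; apply pair_pi0).
    assert (w1 : w ;; fmap F (cpi1 SC X X) = y)
      by (unfold w; rewrite prod_inv_pi1_comp; apply pair_pi1).
    assert (E : x +' y = w ;; fmap F (cpi0 SC X X +' cpi1 SC X X))
      by (rewrite fmap_add, comp_addr, w0, w1; reflexivity).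
    rewrite E, compA, <- fmap_comp, hD, fmap_add, comp_addr, !fmap_comp, <- !compA, w0, w1.
    reflexivity.
  - transitivity (czero SD Z (fob F X) ;; fmap F (czero SC X X) ;; fmap F h).
    { rewrite fmap_zero, comp_zeror; reflexivity. }
    rewrite compA, <- fmap_comp, h0, fmap_zero; apply comp_zeror.
Qed.

Lemma additive_comparison (A B : C) : additive (phi A B).
Proof. apply additive_pair; apply fmap_additive; [apply additive_pi0 | apply additive_pi1]. Qed.

Lemma additive_prod_inv (A B : C) : additive (P A B).
Proof.
  destruct (prod_inv_spec HF A B) as [Pphi phiP].
  exact (additive_inv (additive_comparison A B) Pphi phiP).
Qed.

Lemma fbar_comp (A B E : LensA C) (f : hom A B) (g : hom B E) :
  fbar HF (f ;; g) = lcomp_bwd (fmap LF f) (fmap LF g).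
Proof. cbn; autorewrite with cla fmap; reflexivity. Qed.

Lemma comparison_lens (X Y : LensA C) :
  cpair (LensA_cla D) (fmap LF (cpi0 (LensA_cla C) X Y)) (fmap LF (cpi1 (LensA_cla C) X Y))
  = lens_of_maps (A := fob LF (lprod X Y)) (B := lprod (fob LF X) (fob LF Y))
      (phi (lo1 X) (lo1 Y)) (additive_prod_inv (lo2 X) (lo2 Y)).
Proof.
  apply alens_eq; cbn; [reflexivity |].
  autorewrite with cla fmap.
  rewrite <- (proj1 (additive_prod_inv _ _)), pair_add, addr0, add0r, pair_eta.
  reflexivity.
Qed.

Lemma LensA_fun_isCLAFun : IsCLAFun (LensA_cla C) (LensA_cla D) LF.
Proof.
  split.
  - intros; apply alens_eq; cbn; [apply (clf_id HF) | apply prod_inv_pi1].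
  - intros; apply alens_eq; [apply fmap_comp | apply fbar_comp].
  - intros; apply alens_eq; cbn; rewrite fmap_add; [| apply comp_addr]; reflexivity.
  - intros; apply alens_eq; cbn; rewrite fmap_zero; [| apply comp_zeror]; reflexivity.
  - intros X Y; rewrite comparison_lens.
    exists (lens_of_maps (A := lprod (fob LF X) (fob LF Y)) (B := fob LF (lprod X Y))
      (P (lo1 X) (lo1 Y)) (additive_comparison (lo2 X) (lo2 Y))).
    destruct (prod_inv_spec HF (lo1 X) (lo1 Y)) as [Pphi1 phiP1].
    destruct (prod_inv_spec HF (lo2 X) (lo2 Y)) as [Pphi2 phiP2].
    split; apply lens_of_maps_inv; assumption.
  - destruct (clf_term HF) as [t [tbang bangt]].
    assert (into_Fterm : forall (W : D) (a b : hom W (fob F (cterm SC))), a = b).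
    { intros W a b; rewrite <- (idr a), <- (idr b), <- bangt, <- !compA.
      rewrite (bang_uniq (a ;; _)), (bang_uniq (b ;; _)); reflexivity. }
    exists (@Build_alens D (lterm D) (fob LF (lterm C)) t _ (additive2_zero _ _ _)); split.
    + transitivity (lbang (lterm D)); [| symmetry]; apply lbang_uniq.
    + apply alens_eq; cbn; [exact bangt | apply into_Fterm].
Qed.

End LensAFunctor.

Lemma prod_inv_idF (C : CLACat) (H : CLAFun (idF C)) (A B : C) : prod_inv H A B = idm _.
Proof.
  rewrite <- (idl (prod_inv H A B)); symmetry.
  apply prod_inv_cancel; cbn; cla_simpl; reflexivity.
Qed.

Lemma prod_inv_compF (C D E : CLACat) (F : FunData C D) (G : FunData D E)
    (HF : CLAFun F) (HG : CLAFun G) (HGF : CLAFun (compF F G)) (A B : C) :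
  prod_inv HGF A B = prod_inv HG (fob F A) (fob F B) ;; fmap G (prod_inv HF A B).
Proof.
  rewrite <- (idl (prod_inv HGF A B)); symmetry.
  apply prod_inv_cancel; cbn; rewrite compA, <- (fmap_comp HG), idl.
  - rewrite prod_inv_pi0; apply prod_inv_pi0.
  - rewrite prod_inv_pi1; apply prod_inv_pi1.
Qed.

Lemma LensA_fun_id (C : CLACat) (H : CLAFun (idF C)) : LensA_fun H = idF (LensA C).
Proof.
  unfold LensA_fun, idF; f_equal.
  do 3 (apply functional_extensionality_dep; intro).
  apply alens_eq; cbn; [reflexivity |].
  rewrite prod_inv_idF; apply idl.
Qed.

Lemma LensA_fun_comp (C D E : CLACat) (F : FunData C D) (G : FunData D E)
    (HF : CLAFun F) (HG : CLAFun G) (HGF : CLAFun (compF F G)) :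
  LensA_fun HGF = compF (LensA_fun HF) (LensA_fun HG).
Proof.
  unfold LensA_fun, compF; cbn; f_equal.
  do 3 (apply functional_extensionality_dep; intro).
  apply alens_eq; cbn; [reflexivity |].
  rewrite (prod_inv_compF HF HG), (fmap_comp HG), compA; reflexivity.
Qed.

Theorem theorem2p10 :
  (* Lens_A(C) is a cartesian left-additive category (uniformly in C), and
     Lens_A(F) is a cartesian left-additive functor for every CLA functor F *)
  (exists S : forall C : CLACat, CLAStr (LensA C),
      (forall C : CLACat, IsCat (LensA C) /\ IsCLA (S C)) /\
      (forall (C D : CLACat) (F : FunData C D) (HF : CLAFun F),
          IsCLAFun (S C) (S D) (LensA_fun HF))) /\
  (* Lens_A preserves identities *)
  (forall (C : CLACat) (H : CLAFun (idF C)),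
      LensA_fun H = idF (LensA C)) /\
  (* Lens_A preserves composition *)
  (forall (C D E : CLACat) (F : FunData C D) (G : FunData D E)
          (HF : CLAFun F) (HG : CLAFun G) (HGF : CLAFun (compF F G)),
      LensA_fun HGF = compF (LensA_fun HF) (LensA_fun HG)).
Proof.
  split; [| split].
  - exists LensA_cla; split.
    + intro C; split; [apply LensA_isCat | apply LensA_isCLA].
    + intros C D F HF; apply LensA_fun_isCLAFun.
  - exact LensA_fun_id.
  - exact LensA_fun_comp.
Qed.
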